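(* Let $G$ be a graph, $\ell$ a non-negative integer, and let $G'$ be the graph constructed from $G$ as described in the context. If $(G,\ell)$ is a Yes-instance of \textsc{Edge Induced Forest}, then $(G',4\ell,3\ell)$ is a Yes-instance of \textsc{Contraction(vc)}.
   Context: All graphs are finite, simple and undirected. Construction of $G'$ from $G$: for every vertex $u\in V(G)$ add two vertices $z_u,p_u$ and the edge $z_up_u$. For every edge $uv\in E(G)$ add seven vertices $y^a_{uv},y^b_{uv},y^c_{uv},w^1_{uv},w^2_{uv},p^1_{uv},p^2_{uv}$ and the edges $z_uy^c_{uv}$, $z_vy^c_{uv}$, $y^a_{uv}y^b_{uv}$, $y^a_{uv}y^c_{uv}$, $y^b_{uv}w^1_{uv}$, $y^b_{uv}w^2_{uv}$, $w^1_{uv}p^1_{uv}$, $w^2_{uv}p^2_{uv}$. No other vertices or edges. \textsc{Edge Induced Forest}: given $(G,\ell)$, decide whether there is a set $F$ of at least $\ell$ edges with $G[V(F)]$ a forest, where $V(F)$ is the set of endpoints of $F$. $\mathrm{vc}(H)$ is the minimum size of a vertex cover of $H$; $H/F$ denotes the graph obtained by contracting the edges of $F$ (contracting $uv$ deletes $u,v$ and adds a new vertex adjacent to $(N(u)\cup N(v))\setminus\{u,v\}$, without loops or parallel edges). $(H,k,d)$ is a Yes-instance of \textsc{Contraction(vc)} iff there exists $F\subseteq E(H)$ with $|F|\le k$ and $\mathrm{vc}(H/F)\le\mathrm{vc}(H)-d$. *)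

(* Graphs are given as (V, E) over a finType T:
   V : {set T} is the vertex set, E : {set {set T}} the edge set,
   each edge being a 2-element subset of V. *)
From mathcomp Require Import all_boot.
Set Implicit Arguments. Unset Strict Implicit. Unset Printing Implicit Defensive.

Definition adj (T : finType) (E : {set {set T}}) : rel T :=
  fun x y => [set x; y] \in E.

Definition is_vcover (T : finType) (V : {set T}) (E : {set {set T}})
  (S : {set T}) : bool :=
  (S \subset V) && [forall e in E, e :&: S != set0].

Definition vc (T : finType) (V : {set T}) (E : {set {set T}}) : nat :=
  \big[minn/#|V|]_(S : {set T} | is_vcover V E S) #|S|.

Definition forest (T : finType) (V : {set T}) (E : {set {set T}}) : Prop :=
  ~ exists s : seq T,
      [/\ uniq s, 2 < size s, all (fun x => x \in V) s & cycle (adj E) s].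

Definition induced_E (T : finType) (W : {set T}) (E : {set {set T}}) :=
  [set e in E | e \subset W].

Definition VF (T : finType) (F : {set {set T}}) : {set T} := \bigcup_(e in F) e.

Definition edge_induced_forest (T : finType) (E : {set {set T}}) (l : nat) : Prop :=
  exists F : {set {set T}},
    [/\ F \subset E, l <= #|F| & forest (VF F) (induced_E (VF F) E)].

(* Contraction of an edge set F in H = (V,E): vertices of H/F are the
   connected components of (V, F); two distinct components are adjacent
   iff some edge of H joins them. *)
Definition comp (T : finType) (V : {set T}) (F : {set {set T}}) (x : T) : {set T} :=
  [set y in V | connect (adj F) x y].

Definition contr_V (T : finType) (V : {set T}) (F : {set {set T}}) : {set {set T}} :=
  [set comp V F x | x in V].

Definition contr_E (T : finType) (V : {set T}) (E F : {set {set T}})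
  : {set {set {set T}}} :=
  [set [set C; D] | C in contr_V V F, D in contr_V V F &
     (C != D) && [exists x in C, exists y in D, [set x; y] \in E]].

(* (H, k, d) is a Yes-instance of Contraction(vc); the inequality
   vc(H/F) <= vc(H) - d is stated over the integers as vc(H/F) + d <= vc(H). *)
Definition contraction_vc (T : finType) (V : {set T}) (E : {set {set T}})
  (k d : nat) : Prop :=
  exists F : {set {set T}},
    [/\ F \subset E, #|F| <= k & vc (contr_V V F) (contr_E V E F) + d <= vc V E].

Definition gvert (T : finType) := ((T * 'I_2) + ({set T} * 'I_7))%type.

Definition gz (T : finType) (u : T) : gvert T := inl (u, @inord 1 0).
Definition gp (T : finType) (u : T) : gvert T := inl (u, @inord 1 1).
Definition gya (T : finType) (e : {set T}) : gvert T := inr (e, @inord 6 0).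
Definition gyb (T : finType) (e : {set T}) : gvert T := inr (e, @inord 6 1).
Definition gyc (T : finType) (e : {set T}) : gvert T := inr (e, @inord 6 2).
Definition gw1 (T : finType) (e : {set T}) : gvert T := inr (e, @inord 6 3).
Definition gw2 (T : finType) (e : {set T}) : gvert T := inr (e, @inord 6 4).
Definition gp1 (T : finType) (e : {set T}) : gvert T := inr (e, @inord 6 5).
Definition gp2 (T : finType) (e : {set T}) : gvert T := inr (e, @inord 6 6).

Definition Gp_V (T : finType) (E : {set {set T}}) : {set gvert T} :=
  [set v : gvert T | match v with inl _ => true | inr (e, _) => e \in E end].

Definition Gp_E (T : finType) (E : {set {set T}}) : {set {set gvert T}} :=
  [set [set gz u; gp u] | u : T] :|:
  \bigcup_(e in E)
    ([set [set gz u; gyc e] | u in e] :|: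
     [set [set gya e; gyb e]; [set gya e; gyc e];
          [set gyb e; gw1 e]; [set gyb e; gw2 e];
          [set gw1 e; gp1 e]; [set gw2 e; gp2 e]]).

From mathcomp Require Import all_boot zify.

(* The n + 3m edges z_u p_u, y^a_e y^b_e, w^1_e p^1_e, w^2_e p^2_e of G' are pairwise
   disjoint, so vc(G') >= n + 3m.  Given l edges F of G inducing a forest, contract, for
   each e = uv in F, the four edges z_u y^c_e, z_v y^c_e, y^b_e w^1_e, y^b_e w^2_e.  The
   vertex cover {z_u} ∪ {w^1_e, w^2_e} ∪ {y^a_e : e ∉ F} ∪ {y^b_e, y^c_e : e ∈ F}
   of G' maps to a vertex cover of the contracted graph made of the classes of the z_u,
   of the w^1_e, and of w^2_e, y^a_e for e ∉ F.  As F is acyclic the z_u fall into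
   at most n - l classes, which leaves at most (n - l) + m + 2(m - l) = n + 3m - 3l. *)
Set Implicit Arguments. Unset Strict Implicit. Unset Printing Implicit Defensive.

Lemma bigmin_le (I : finType) (P : pred I) (F : I -> nat) x0 j :
  P j -> \big[minn/x0]_(i | P i) F i <= F j.
Proof.
move=> Pj; rewrite -big_filter.
have: j \in [seq i <- index_enum I | P i] by rewrite mem_filter Pj mem_index_enum.
elim: (filter _ _) => //= a s IHs.
rewrite in_cons big_cons => /orP[/eqP-> | /IHs]; first exact: geq_minl.
exact: leq_trans (geq_minr _ _).
Qed.

Lemma setI2_neq0 (T : finType) (S : {set T}) a b :
  ([set a; b] :&: S != set0) = (a \in S) || (b \in S).
Proof.
apply/set0Pn/orP => [[x /setIP[/set2P[]-> xS]] | [aS | bS]]; [by left | by right | |].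
- by exists a; rewrite inE set21.
- by exists b; rewrite inE set22.
Qed.

Lemma leq_card_bigcup (I T : finType) (A : {set I}) (B : I -> {set T}) :
  #|\bigcup_(i in A) B i| <= \sum_(i in A) #|B i|.
Proof.
apply: (big_ind2 (fun (X : {set T}) n => #|X| <= n)) => [|X1 n1 X2 n2 leX1 leX2|//].
  by rewrite cards0.
exact: leq_trans (leq_card_setU X1 X2).1 (leq_add leX1 leX2).
Qed.

Section VertexCover.
Variables (T : finType) (V : {set T}) (E : {set {set T}}).

Lemma vc_le_cover S : is_vcover V E S -> vc V E <= #|S|.
Proof. exact: bigmin_le. Qed.

Lemma leq_vc N :
  N <= #|V| -> (forall S, is_vcover V E S -> N <= #|S|) -> N <= vc V E.
Proof.
move=> leNV leNS; apply: (big_ind (leq N)) => // m n leNm leNn.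
by rewrite leq_min leNm leNn.
Qed.

Lemma leq_card_hitting (I : finType) (A : {set I}) (M : I -> {set T}) (k : T -> I) S :
  (forall i x, x \in M i -> k x = i) -> (forall i, i \in A -> M i :&: S != set0) ->
  #|A| <= #|S|.
Proof.
move=> Mk hitS; apply: leq_trans (leq_imset_card k S).
apply/subset_leq_card/subsetP => i /hitS/set0Pn[x /setIP[xM xS]].
by rewrite -(Mk i x xM) imset_f.
Qed.

End VertexCover.

Lemma adjC (T : finType) (E : {set {set T}}) x y : adj E x y = adj E y x.
Proof. by rewrite /adj setUC. Qed.

Lemma connect_adj_sym (T : finType) (E : {set {set T}}) : connect_sym (adj E).
Proof. exact/sym_connect_sym/adjC. Qed.

Lemma connect_adj_sub (T : finType) (F1 F : {set {set T}}) :
  F1 \subset F -> subrel (connect (adj F1)) (connect (adj F)).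
Proof. by move=> sF; apply: connect_sub => x y /(subsetP sF) xy; apply: connect1. Qed.

Section Contraction.
Variables (T : finType) (V : {set T}) (F : {set {set T}}).

Lemma comp_connect x y : connect (adj F) x y -> comp V F x = comp V F y.
Proof.
move=> cxy; apply/setP => z; rewrite !inE; congr andb.
by apply/idP/idP; apply: connect_trans; rewrite // connect_adj_sym.
Qed.

Lemma comp_edge x y : [set x; y] \in F -> comp V F x = comp V F y.
Proof. by move=> xy; apply/comp_connect/connect1. Qed.

Lemma comp_of_mem C z : C \in contr_V V F -> z \in C -> comp V F z = C.
Proof. by case/imsetP => x _ ->; rewrite inE => /andP[_ /comp_connect]. Qed.

Lemma contr_vcover E S :
  is_vcover V E S -> is_vcover (contr_V V F) (contr_E V E F) (comp V F @: S).
Proof.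
case/andP => SV /forall_inP coverS; rewrite /is_vcover imsetS //=.
apply/forall_inP => e /imset2P[C D CV]; rewrite inE => /andP[DV /andP[_ CDE]] ->.
case/exists_inP: CDE => x xC /exists_inP[y yD /coverS].
rewrite !setI2_neq0 -(comp_of_mem CV xC) -(comp_of_mem DV yD).
by case/orP => zS; apply/orP; [left | right]; apply: imset_f.
Qed.

End Contraction.

Definition acyclic (T : finType) (F : {set {set T}}) :=
  forall u v, [set u; v] \in F -> u != v -> ~~ connect (adj (F :\ [set u; v])) u v.

Lemma acyclic_sub (T : finType) (F1 F : {set {set T}}) :
  F1 \subset F -> acyclic F -> acyclic F1.
Proof.
move=> sF acF u v uvF1 neq_uv; apply: contra (acF u v (subsetP sF _ uvF1) neq_uv).
exact/connect_adj_sub/setSD.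
Qed.

(* Deleting a bridge uv of F, the function x |-> (g x, [u ~ x]) is constant on the
   remaining edges and separates u from v, so induction on #|F| applies. *)
Lemma card_imset_acyclic (T X : finType) (F : {set {set T}}) (g : T -> X) :
  (forall e, e \in F -> #|e| = 2) -> acyclic F ->
  (forall u v, [set u; v] \in F -> g u = g v) ->
  #|g @: [set: T]| + #|F| <= #|T|.
Proof.
move cardF: #|F| => k; elim: k F cardF X g => [|k IHk] F cardF X g F2 acF gF.
  by rewrite addn0 -cardsT leq_imset_card.
have /set0Pn[e uvF] : F != set0 by rewrite -card_gt0 cardF.
have /eqP/cards2P[u [v [neq_uv De]]] := F2 e uvF; subst e.
set F0 := F :\ [set u; v].
have sF0 : F0 \subset F := subsetDl _ _.
pose g' x := (g x, connect (adj F0) u x).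
have g'F0 a b : [set a; b] \in F0 -> g' a = g' b.
  move=> abF0; rewrite /g' (gF a b (subsetP sF0 _ abF0)); congr pair.
  by apply/idP/idP => /connect_trans; apply; apply: connect1; rewrite // adjC.
have cardF0 : #|F0| = k by move: cardF; rewrite (cardsD1 [set u; v] F) uvF => -[].
have := IHk F0 cardF0 _ g' (fun e eF0 => F2 e (subsetP sF0 _ eF0)) (acyclic_sub sF0 acF) g'F0.
have lt_g_g' : #|g @: [set: T]| < #|g' @: [set: T]|.
  have -> : g @: [set: T] = fst @: (g' @: [set: T]) by rewrite -imset_comp.
  rewrite ltn_neqAle leq_imset_card andbT; apply/negP => /imset_injP inj_fst.
  have /inj_fst : g' u \in g' @: [set: T] by rewrite imset_f.
  move=> /(_ (g' v) (imset_f _ (in_setT v))) /=; rewrite (gF u v uvF) => /(_ erefl) [_].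
  by rewrite connect0 => /esym; apply/negP: (acF u v uvF neq_uv).
lia.
Qed.

Lemma mem_VF (T : finType) (F : {set {set T}}) e x : e \in F -> x \in e -> x \in VF F.
Proof. by move=> eF xe; apply/bigcupP; exists e. Qed.

Lemma path_VF (T : finType) (F : {set {set T}}) x p :
  path (adj F) x p -> all (mem (VF F)) p.
Proof.
elim: p x => //= y p IHp x /andP[xy /IHp ->]; rewrite andbT.
exact: mem_VF xy (set22 x y).
Qed.

Lemma forest_acyclic (T : finType) (E F : {set {set T}}) :
  F \subset E -> forest (VF F) (induced_E (VF F) E) -> acyclic F.
Proof.
move=> sFE forestF u v uvF neq_uv; apply/negP => /connectP[p pth lastp].
move: lastp; case/shortenP: pth => p' pth' uniq_up' _ lastp'.
have sF0 : F :\ [set u; v] \subset F := subsetDl _ _.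
have induced e : e \in F -> e \in induced_E (VF F) E.
  by move=> eF; rewrite inE (subsetP sFE _ eF); apply/subsetP => x; apply: mem_VF.
have adj_sub : subrel (adj (F :\ [set u; v])) (adj F) by move=> a b /(subsetP sF0).
apply: forestF; exists (u :: p'); split => //.
- case: p' pth' {uniq_up'} lastp' => [|w [|w' q]] //= pth' lastp'.
    by move: neq_uv; rewrite lastp' eqxx.
  by move: pth'; rewrite andbT -lastp' /adj !inE eqxx.
- by rewrite /= (mem_VF uvF (set21 u v)) (path_VF (sub_path adj_sub pth')).
- rewrite /cycle rcons_path (sub_path (fun a b ab => induced _ (adj_sub a b ab)) pth').
  by rewrite -lastp' /adj setUC induced.
Qed.

Section GprimeCover.
Variables (T : finType) (E : {set {set T}}).

Lemma Gp_E_zp u : [set gz u; gp u] \in Gp_E E.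
Proof. by apply/setUP; left; apply/imsetP; exists u. Qed.

Lemma Gp_E_zyc e u : e \in E -> u \in e -> [set gz u; gyc e] \in Gp_E E.
Proof.
move=> eE ue; apply/setUP; right; apply/bigcupP; exists e => //.
by apply/setUP; left; apply/imsetP; exists u.
Qed.

Lemma Gp_E_gadget e x : e \in E ->
  x \in [set [set gya e; gyb e]; [set gya e; gyc e];
             [set gyb e; gw1 e]; [set gyb e; gw2 e];
             [set gw1 e; gp1 e]; [set gw2 e; gp2 e]] -> x \in Gp_E E.
Proof. by move=> eE xe; apply/setUP; right; apply/bigcupP; exists e; rewrite // inE xe orbT. Qed.

Definition matching_edge (i : T + ({set T} * 'I_3)) : {set gvert T} :=
  match i with
  | inl u => [set gz u; gp u]
  | inr (e, j) =>
    match val j with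
    | 0 => [set gya e; gyb e]
    | 1 => [set gw1 e; gp1 e]
    | _ => [set gw2 e; gp2 e]
    end
  end.

(* Gadget vertex i of e is y^a, y^b, y^c, w^1, w^2, p^1, p^2 for i = 0, ..., 6;
   y^c, which lies on no matching edge, is sent to an arbitrary index. *)
Definition matching_of (x : gvert T) : T + ({set T} * 'I_3) :=
  match x with
  | inl (u, _) => inl u
  | inr (e, i) => inr (e, inord match val i with 0 | 1 => 0 | 3 | 5 => 1 | _ => 2 end)
  end.

Lemma matching_ofE i x : x \in matching_edge i -> matching_of x = i.
Proof.
case: i => [u /set2P[]-> // | [e [[|[|[|//]]] lt_j3]] /set2P[]->];
  by congr (inr (e, _)); apply/val_inj; rewrite /= !inordK.
Qed.

Definition matching_index : {set T + ({set T} * 'I_3)} :=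
  inl @: [set: T] :|: inr @: setX E [set: 'I_3].

Lemma card_matching_index : #|matching_index| = #|T| + 3 * #|E|.
Proof.
have disj : [disjoint inl @: [set: T] & inr @: setX E [set: 'I_3]].
  by rewrite -setI_eq0 -subset0; apply/subsetP => _ /setIP[/imsetP[u _ ->] /imsetP[]].
move: disj; rewrite -(leq_card_setU _ _).2 => /eqP->.
rewrite !card_imset; try exact: inl_inj; try exact: inr_inj.
by rewrite cardsX !cardsT card_ord mulnC.
Qed.

Lemma matching_edge_Gp i :
  i \in matching_index -> matching_edge i \in Gp_E E /\ matching_edge i :&: Gp_V E != set0.
Proof.
case/setUP => /imsetP[x xD ->]; first by rewrite Gp_E_zp setI2_neq0 inE.
case: x xD => e [[|[|[|//]]] ?]; rewrite inE => /andP[/= eE _];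
  by split; [apply: (Gp_E_gadget eE); rewrite !inE eqxx ?orbT | rewrite setI2_neq0 inE /= eE].
Qed.

Lemma vc_Gp_ge : #|T| + 3 * #|E| <= vc (Gp_V E) (Gp_E E).
Proof.
rewrite -card_matching_index; apply: leq_vc => [|S /andP[_ /forall_inP coverS]];
  apply: (leq_card_hitting (k := matching_of)) matching_ofE _ => i /matching_edge_Gp[Gp_i meetV].
- exact: meetV.
- exact: coverS.
Qed.

End GprimeCover.

Section ForestContraction.
Variables (T : finType) (E F : {set {set T}}).
Hypotheses (E2 : forall e, e \in E -> #|e| = 2) (sFE : F \subset E) (acF : acyclic F).

Definition contracted_edges : {set {set gvert T}} :=
  (\bigcup_(e in F) [set [set gz u; gyc e] | u in e]) :|:
  [set [set gyb e; gw1 e] | e in F] :|: [set [set gyb e; gw2 e] | e in F].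

Lemma contracted_edges_sub : contracted_edges \subset Gp_E E.
Proof.
apply/subsetP => _ /setUP[/setUP[/bigcupP[e eF /imsetP[u ue ->]] | /imsetP[e eF ->]] |
  /imsetP[e eF ->]].
- exact: Gp_E_zyc (subsetP sFE _ eF) ue.
- by apply: (Gp_E_gadget (subsetP sFE _ eF)); rewrite !inE eqxx ?orbT.
- by apply: (Gp_E_gadget (subsetP sFE _ eF)); rewrite !inE eqxx ?orbT.
Qed.

Lemma card_contracted_edges : #|contracted_edges| <= 4 * #|F|.
Proof.
have card_zyc : #|\bigcup_(e in F) [set [set gz u; gyc e] | u in e]| <= 2 * #|F|.
  rewrite mulnC -sum_nat_const; apply: leq_trans (leq_card_bigcup _ _) _.
  apply: leq_sum => e eF.
  by apply: leq_trans (leq_imset_card _ _) _; rewrite (E2 (subsetP sFE _ eF)).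
apply: leq_trans (leq_card_setU _ _).1 _; rewrite (mulnDl 3 1) mul1n leq_add ?leq_imset_card //.
by apply: leq_trans (leq_card_setU _ _).1 _; rewrite (mulnDl 2 1) mul1n leq_add ?leq_imset_card.
Qed.

Definition base_cover : {set gvert T} :=
  (@gz T) @: [set: T] :|: (@gw1 T) @: E :|: (@gw2 T) @: E :|:
  (@gya T) @: (E :\: F) :|: (@gyb T) @: F :|: (@gyc T) @: F.

Lemma base_cover_vcover : is_vcover (Gp_V E) (Gp_E E) base_cover.
Proof.
have mem_z u : gz u \in base_cover by rewrite !inE imset_f ?inE.
have mem_w1 e : e \in E -> gw1 e \in base_cover by move=> eE; rewrite !inE imset_f ?orbT.
have mem_w2 e : e \in E -> gw2 e \in base_cover by move=> eE; rewrite !inE imset_f ?orbT.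
have mem_ya e : e \in E -> e \notin F -> gya e \in base_cover.
  by move=> eE eNF; rewrite !inE imset_f ?orbT // inE eNF.
have mem_yb e : e \in F -> gyb e \in base_cover by move=> eF; rewrite !inE imset_f ?orbT.
have mem_yc e : e \in F -> gyc e \in base_cover by move=> eF; rewrite !inE imset_f ?orbT.
apply/andP; split.
  apply/subsetP => _ /setUP[/setUP[/setUP[/setUP[/setUP[]|]|]|]|] /imsetP[e eD ->];
    by rewrite inE //=; first [exact: subsetP sFE _ eD | exact: subsetP (subsetDl E F) _ eD].
apply/forall_inP => x /setUP[/imsetP[u _ ->] | /bigcupP[e eE]]; first by rewrite setI2_neq0 mem_z.
rewrite inE => /orP[/imsetP[u _ ->] | ]; first by rewrite setI2_neq0 mem_z.
rewrite !inE => /orP[/orP[/orP[/orP[/orP[]|]|]|]|] /eqP->;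
  rewrite setI2_neq0 ?(mem_w1 _ eE) ?(mem_w2 _ eE) ?orbT //.
all: have [eF | eNF] := boolP (e \in F).
1,3: by rewrite ?(mem_yb _ eF) ?(mem_yc _ eF) orbT.
all: by rewrite mem_ya.
Qed.

Let cmp := comp (Gp_V E) contracted_edges.

Lemma cmp_zyc e u : e \in F -> u \in e -> cmp (gyc e) = cmp (gz u).
Proof.
move=> eF ue; symmetry; apply/comp_edge/setUP; left; apply/setUP; left.
by apply/bigcupP; exists e => //; apply: imset_f.
Qed.

Lemma cmp_yb_w1 e : e \in F -> cmp (gyb e) = cmp (gw1 e).
Proof. by move=> eF; apply/comp_edge/setUP; left; apply/setUP; right; apply: imset_f. Qed.

Lemma cmp_yb_w2 e : e \in F -> cmp (gyb e) = cmp (gw2 e).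
Proof. by move=> eF; apply/comp_edge/setUP; right; apply: imset_f. Qed.

Definition cover_classes : {set {set gvert T}} :=
  [set cmp (gz u) | u in [set: T]] :|: [set cmp (gw1 e) | e in E] :|:
  [set cmp (gw2 e) | e in E :\: F] :|: [set cmp (gya e) | e in E :\: F].

Lemma image_base_cover : cmp @: base_cover \subset cover_classes.
Proof.
have cls_z u : cmp (gz u) \in cover_classes.
  by do 3!(apply/setUP; left); apply/imsetP; exists u.
have cls_w1 e : e \in E -> cmp (gw1 e) \in cover_classes.
  by move=> eE; do 2!(apply/setUP; left); apply/setUP; right; apply/imsetP; exists e.
have cls_w2 e : e \in E :\: F -> cmp (gw2 e) \in cover_classes.
  by move=> eEF; apply/setUP; left; apply/setUP; right; apply/imsetP; exists e.
have cls_ya e : e \in E :\: F -> cmp (gya e) \in cover_classes.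
  by move=> eEF; apply/setUP; right; apply/imsetP; exists e.
have inF e : e \in F -> e \in E := subsetP sFE e.
apply/subsetP => _ /imsetP[_ /setUP[/setUP[/setUP[/setUP[/setUP[]|]|]|]|] /imsetP[e eD ->] ->].
- exact: cls_z.
- exact: cls_w1.
- have [eF | eNF] := boolP (e \in F); last by rewrite cls_w2 // inE eNF.
  by rewrite -cmp_yb_w2 // cmp_yb_w1 // cls_w1 ?inF.
- exact: cls_ya.
- by rewrite cmp_yb_w1 // cls_w1 ?inF.
- have /eqP/cards2P[u [v [_ De]]] := E2 (inF e eD).
  by rewrite (cmp_zyc (u := u)) // De set21.
Qed.

Lemma card_cover_classes : #|cover_classes| + 3 * #|F| <= #|T| + 3 * #|E|.
Proof.
have card_z : #|[set cmp (gz u) | u in [set: T]]| + #|F| <= #|T|.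
  apply: (card_imset_acyclic (fun e eF => E2 (subsetP sFE e eF)) acF) => u v uvF.
  by rewrite -(cmp_zyc uvF (set21 u v)) (cmp_zyc uvF (set22 u v)).
have card_w1 : #|[set cmp (gw1 e) | e in E]| <= #|E| := leq_imset_card _ _.
have card_w2 : #|[set cmp (gw2 e) | e in E :\: F]| <= #|E| - #|F|.
  by rewrite -cardsDS ?leq_imset_card.
have card_ya : #|[set cmp (gya e) | e in E :\: F]| <= #|E| - #|F|.
  by rewrite -cardsDS ?leq_imset_card.
have leFE : #|F| <= #|E| := subset_leq_card sFE.
have card_union : #|cover_classes| <= #|[set cmp (gz u) | u in [set: T]]| +
    #|[set cmp (gw1 e) | e in E]| + #|[set cmp (gw2 e) | e in E :\: F]| +
    #|[set cmp (gya e) | e in E :\: F]|.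
  by rewrite /cover_classes; do 3!(apply: leq_trans (leq_card_setU _ _).1 _; rewrite leq_add2r).
lia.
Qed.

End ForestContraction.

Lemma exists_subset_card (T : finType) (A : {set T}) n :
  n <= #|A| -> exists2 B : {set T}, B \subset A & #|B| = n.
Proof.
case/card_geqP => s [uniq_s <- sA]; exists [set x in s]; last by rewrite cardsE; apply/card_uniqP.
by apply/subsetP => x; rewrite inE => /sA.
Qed.

Unset Implicit Arguments.
Set Strict Implicit.

Theorem lemma7 (T : finType) (E : {set {set T}}) (l : nat)
  (HE : forall e, e \in E -> #|e| = 2) :
  edge_induced_forest E l ->
  contraction_vc (Gp_V E) (Gp_E E) (4 * l) (3 * l).
Proof.
case=> F [sFE leF forestF].
have [F1 sF1F <-] := exists_subset_card leF.
have sF1E : F1 \subset E := subset_trans sF1F sFE.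
have acF1 : acyclic F1 := acyclic_sub sF1F (forest_acyclic sFE forestF).
exists (contracted_edges F1); split.
- exact: contracted_edges_sub.
- exact: card_contracted_edges HE sF1E.
- apply: leq_trans (vc_Gp_ge E); apply: leq_trans (card_cover_classes HE sF1E acF1).
  rewrite leq_add2r; apply: leq_trans (subset_leq_card (image_base_cover HE sF1E)).
  exact/vc_le_cover/contr_vcover/base_cover_vcover.
Qed.
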